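(* Let $V$ be a finite nonempty set and $f:\{0,1\}^V\to\{0,1\}^V$ an and-net. Every subnetwork of $f$ has at most one fixed point if and only if $f$ has no positive-circular subnetwork.
   Context: For nonempty $I\subseteq V$ and $z\in\{0,1\}^{V\setminus I}$, the subnetwork of $f$ induced by $z$ is $h:\{0,1\}^I\to\{0,1\}^I$ with $h(x|_I)=f(x)|_I$ for all $x$ whose restriction to $V\setminus I$ is $z$ ($f$ is a subnetwork of itself). For a network $g$ on $W$ and $x^{j\alpha}$ the point equal to $x$ except its $j$-component is $\alpha$, the global interaction graph $G(g)$ is the signed digraph on $W$ with a positive (resp. negative) arc from $j$ to $i$ iff $g_i(x^{j1})-g_i(x^{j0})=1$ (resp. $=-1$) for at least one $x$. $f$ is an and-net if $G(f)$ has at most one arc from $j$ to $i$ for all $i,j$ and for every $i$ and $x$: $f_i(x)=1$ iff $G(f)$ has no positive arc $j\to i$ with $x_j=0$ and no negative arc $j\to i$ with $x_j=1$. A cycle is a subgraph with at most one arc between any ordered pair whose underlying unsigned digraph is a directed cycle; positive if it has an even number of negative arcs. $g$ is positive-circular if $G(g)$ itself is a positive cycle through all vertices of $W$. *)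

From mathcomp Require Import all_boot all_order.
Set Implicit Arguments. Unset Strict Implicit. Unset Printing Implicit Defensive.

Definition network (W : finType) := {ffun W -> bool} -> {ffun W -> bool}.

Section Defs.
Variable W : finType.

Definition upd (x : {ffun W -> bool}) (j : W) (a : bool) : {ffun W -> bool} :=
  [ffun k => if k == j then a else x k].

Definition pos_arc (g : network W) (j i : W) : bool :=
  [exists x, g (upd x j true) i && ~~ g (upd x j false) i].

Definition neg_arc (g : network W) (j i : W) : bool :=
  [exists x, ~~ g (upd x j true) i && g (upd x j false) i].

Definition arc (g : network W) (j i : W) : bool := pos_arc g j i || neg_arc g j i.

Definition and_net (g : network W) : Prop :=
  (forall j i, ~~ (pos_arc g j i && neg_arc g j i)) /\
  (forall i x, g x i =
     [forall j, ~~ (pos_arc g j i && ~~ x j) && ~~ (neg_arc g j i && x j)]).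

(* G(g) is itself a positive cycle through all vertices of W:
   at most one arc per ordered pair, the underlying unsigned digraph is a
   directed cycle j -> s j visiting every vertex, and the number of negative
   arcs is even. *)
Definition positive_circular (g : network W) : Prop :=
  (forall j i, ~~ (pos_arc g j i && neg_arc g j i)) /\
  exists s : W -> W,
    (forall j i, arc g j i = (i == s j)) /\
    (forall i j, fconnect s i j) /\
    ~~ odd #|[set j | neg_arc g j (s j)]|.

Definition fixed_point (g : network W) (x : {ffun W -> bool}) : Prop := g x = x.

Definition at_most_one_fixed_point (g : network W) : Prop :=
  forall x y, fixed_point g x -> fixed_point g y -> x = y.

End Defs.

Section Sub.
Variable V : finType.

Definition glue (I : {set V}) (z : {ffun V -> bool})
    (y : {ffun {i : V | i \in I} -> bool}) : {ffun V -> bool} :=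
  [ffun v => match (insub v : option {i : V | i \in I}) with
             | Some i => y i
             | None => z v end].

(* the subnetwork of f induced by (the restriction to V \ I of) z *)
Definition subnet (f : network V) (I : {set V}) (z : {ffun V -> bool})
  : network {i : V | i \in I} :=
  fun y => [ffun i => f (glue z y) (val i)].

End Sub.
Arguments glue {V} I z y.
Arguments subnet {V} f I z _.

From Pilot Require Import Defs.
From mathcomp Require Import all_boot all_order.
(* [arc] is the interaction-graph arc of [Defs], not [path.arc]. *)
Import Defs.
Set Implicit Arguments. Unset Strict Implicit. Unset Printing Implicit Defensive.

(* A positive-circular network has two fixed points: a bit propagated once around
   the cycle returns unchanged because the number of negative arcs is even.

   Conversely, let the subnetwork on I have two distinct fixed points, with I
   minimal.  Extended by their common values outside I they give two states X, Y
   of f, both fixed on I; minimality forces Y = ~~ X on I.  Hence every literal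
   entering I from outside holds, and the literal of an arc j -> i inside I takes
   the value X i.  If T is a nonempty subset of I in which every vertex has an
   in-neighbour, and some state satisfies all literals entering T from I :\: T,
   then the restrictions of X and Y to T are two fixed points of a subnetwork on
   T, so T = I.  Choose for each vertex an out-neighbour which is X-true or whose
   only in-neighbour in I it is: the recurrent vertices of this choice form such
   a T, so every vertex is reached; doing the same with Y-true vertices shows
   that every vertex of I has a unique in-neighbour in I.  The subnetwork on I is
   then a single cycle (again by the closure argument), positive because its
   negative arcs are exactly the colour changes of X along it. *)

Section Recurrence.
Variables (T : finType) (g : T -> T) (A : {set T}).
Hypothesis gA : {in A, forall x, g x \in A}.

Definition recurrent_in := [set x in A | fconnect g (g x) x].

Lemma recurrent_in_sub : recurrent_in \subset A.
Proof. by apply/subsetP => x; rewrite inE => /andP[]. Qed.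

Lemma recurrent_in_neq0 : A != set0 -> recurrent_in != set0.
Proof.
case/set0Pn=> x xA; have /trajectP[i lt_i_ord loop] := looping_order g x.
apply/set0Pn; exists (iter i g x); rewrite inE (iter_in _ gA) //=.
have [k ord_i] : exists k, order g x - i = k.+1.
  by exists (order g x - i).-1; rewrite prednK // subn_gt0.
have cycle : iter k.+1 g (iter i g x) = iter i g x.
  by rewrite -ord_i -iterD subnK ?loop // ltnW.
by rewrite -{2}cycle iterSr fconnect_iter.
Qed.

Lemma recurrent_in_preimage x :
  x \in recurrent_in -> exists2 y, y \in recurrent_in & g y = x.
Proof.
rewrite inE => /andP[xA /iter_findex]; set k := findex _ _ _ => cycle.
have gy : g (iter k g x) = x by rewrite -iterS iterSr.
exists (iter k g x) => //; rewrite inE (iter_in _ gA) // gy.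
exact: fconnect_iter.
Qed.

End Recurrence.

Section Networks.
Variable W : finType.
Implicit Types (g : network W) (x y : {ffun W -> bool}).

Lemma upd_id x j : upd x j (x j) = x.
Proof. by apply/ffunP => k; rewrite ffunE; case: eqP => // ->. Qed.

Lemma upd_no_arc g j i x b : ~~ arc g j i -> g (upd x j b) i = g x i.
Proof.
rewrite negb_or => /andP[/existsPn no_pos /existsPn no_neg].
have flat : g (upd x j true) i = g (upd x j false) i.
  by move: (no_pos x) (no_neg x); case: (g _ i); case: (g _ i).
by rewrite -{2}(upd_id x j); case: b; case: (x j); rewrite // flat.
Qed.

Lemma eq_network_at g i x y :
  (forall j, arc g j i -> x j = y j) -> g x i = g y i.
Proof.
move=> xy_in; have [n] := ubnP #|[set j | x j != y j]|.
elim: n x xy_in => // n IHn x xy_in /ltnSE le_diff_n.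
case: (pickP [pred j | x j != y j]) => [j /= xyj | xy]; last first.
  by congr (g _ i); apply/ffunP => j; apply/eqP/negbNE/negbT/xy.
have no_arc : ~~ arc g j i by apply: contra xyj => /xy_in ->.
rewrite -(upd_no_arc x (y j) no_arc); apply: IHn.
  by move=> k /xy_in xyk; rewrite ffunE; case: eqP => [->|].
have -> : [set k | upd x j (y j) k != y k] = [set k | x k != y k] :\ j.
  by apply/setP => k; rewrite !inE ffunE; case: (eqVneq k j) => [->|]; rewrite ?eqxx.
by apply: leq_trans le_diff_n; rewrite [X in _ < X](cardsD1 j) inE xyj.
Qed.

Lemma single_input_value g p i :
  (forall j, arc g j i -> j = p) -> arc g p i ->
  ~~ (pos_arc g p i && neg_arc g p i) ->
  forall x, g x i = (x p != neg_arc g p i).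
Proof.
move=> only_p arc_p excl x.
have from_p y : g x i = g (upd y p (x p)) i.
  by apply: eq_network_at => j /only_p ->; rewrite ffunE eqxx.
case/orP: arc_p => [pos | neg].
- have [y /andP[y1 y0]] := existsP pos.
  move: excl; rewrite pos /= => /negbTE ->.
  by rewrite (from_p y); case: (x p); rewrite ?y1 ?(negbTE y0).
- have [y /andP[y1 y0]] := existsP neg.
  by rewrite neg (from_p y); case: (x p); rewrite ?y0 ?(negbTE y1).
Qed.

Lemma single_input_arcs g p (b : bool) i :
  (forall x, g x i = (x p != b)) ->
  forall j, pos_arc g j i = (j == p) && ~~ b /\ neg_arc g j i = (j == p) && b.
Proof.
move=> gi j; rewrite /pos_arc /neg_arc.
have upd_p x a : upd x j a p = if j == p then a else x p by rewrite ffunE eq_sym.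
have no_arc : j != p -> forall x a, g (upd x j a) i = (x p != b).
  by move=> jp x a; rewrite gi upd_p (negbTE jp).
have [->|jp] := eqVneq j p; last first.
  by split; apply/negbTE/existsPn => x; rewrite !no_arc // ?andbN ?andNb.
have at_p x a : g (upd x p a) i = (a != b) by rewrite gi ffunE eqxx.
split; under eq_existsb => x do rewrite !at_p; case: b {gi no_arc at_p} => /=;
  by [apply/negbTE/existsPn | apply/existsP; exists [ffun=> true]].
Qed.

Lemma odd_card_addb (P : pred W) : odd #|[set j | P j]| = \big[addb/false]_j P j.
Proof.
rewrite -sum1_card big_mkcond (big_morph odd oddD (erefl (odd 0))) /=.
by apply: eq_bigr => j _; rewrite inE; case: (P j).
Qed.

Lemma even_card_changes (s : W -> W) (c : W -> bool) :
  injective s -> ~~ odd #|[set j | c j != c (s j)]|.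
Proof.
move=> s_inj; rewrite odd_card_addb.
under eq_bigr do rewrite negb_eqb.
by rewrite big_split /= -(reindex_inj s_inj (P := predT) (F := c)) addbb.
Qed.

Lemma cyclic_potential (s : W -> W) (c : W -> bool) (w0 : W) :
  injective s -> (forall i j, fconnect s i j) -> ~~ odd #|[set j | c j]| ->
  exists x : {ffun W -> bool}, forall j, x (s j) = x j (+) c j.
Proof.
move=> s_inj conn even_c.
pose N := order s w0.
pose parity m := \big[addb/false]_(k < m) c (iter k s w0).
have parity_N : parity N = false.
  have iter_bij : bijective (fun k : 'I_N => iter k s w0).
    apply: inj_card_bij => [k l /(congr1 (findex s w0))|].
      by rewrite !findex_iter //; apply: val_inj.
    by rewrite card_ord /N /order; apply/subset_leq_card/subsetP => v _; exact: conn.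
  by move: even_c; rewrite odd_card_addb (reindex _ (onW_bij _ iter_bij)) => /negbTE.
exists [ffun v => parity (findex s w0 v)] => j; rewrite !ffunE.
have := findex_max (conn w0 j); have := iter_findex (conn w0 j).
set k := findex s w0 j => j_def lt_k_N.
have parity_S : parity k.+1 = parity k (+) c j by rewrite /parity big_ord_recr /= j_def.
case: (ltngtP k.+1 N) => [lt_k1_N | | k1_N].
- by rewrite -parity_S -j_def -iterS findex_iter.
- by rewrite ltnNge lt_k_N.
- have -> : s j = w0 by rewrite -j_def -iterS k1_N iter_order.
  by rewrite findex0 -parity_S k1_N parity_N /parity big_ord0.
Qed.

Lemma positive_circular_fixed_points g (w0 : W) :
  positive_circular g -> exists x y, [/\ fixed_point g x, fixed_point g y & x <> y].
Proof.
case=> excl [s [arc_s [conn even_neg]]].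
have /fin_all_exists[r rK] : forall i, exists j, s j = i.
  move=> i; have := iter_findex (conn (s i) i).
  by exists (iter (findex s (s i) i) s i); rewrite -iterS iterSr.
have sK : cancel s r := (bij_can_sym (injF_bij (can_inj rK)) s).2 rK.
pose n j := neg_arc g j (s j).
have g_val x i : g x i = (x (r i) != n (r i)).
  rewrite /n rK; apply: single_input_value => [j||]; last exact: excl.
    by rewrite arc_s => /eqP->; rewrite sK.
  by rewrite arc_s rK.
have fixed x : (forall j, x (s j) = x j (+) n j) -> fixed_point g x.
  by move=> x_pot; apply/ffunP => i; rewrite g_val -[x i](congr1 x (rK i)) x_pot negb_eqb.
have [x x_pot] := cyclic_potential w0 (can_inj sK) conn even_neg.
exists x, [ffun v => ~~ x v]; split; first exact: fixed.
  by apply: fixed => j; rewrite !ffunE x_pot addNb.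
by move/ffunP/(_ w0); rewrite ffunE; case: (x w0).
Qed.

End Networks.

Definition splice (T : finType) (A : {set T}) (x z : {ffun T -> bool}) :=
  [ffun v => if v \in A then x v else z v].

Section Glue.
Variables (V : finType) (I : {set V}) (z : {ffun V -> bool}).

Lemma glue_val y (i : {i : V | i \in I}) : glue I z y (val i) = y i.
Proof. by rewrite ffunE valK. Qed.

Lemma glue_out y v : v \notin I -> glue I z y v = z v.
Proof. by move=> vI; rewrite ffunE insubN. Qed.

Lemma glue_inj : injective (glue I z).
Proof. by move=> y1 y2 eq_glue; apply/ffunP => i; rewrite -!glue_val eq_glue. Qed.

End Glue.

Section AndNet.
Variables (V : finType) (f : network V).
Hypothesis f_and : and_net f.
Implicit Types (I T : {set V}) (x z X Y : {ffun V -> bool}).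

Definition literal j i x := x j != neg_arc f j i.

Lemma and_netE x i : f x i = [forall j, arc f j i ==> literal j i x].
Proof.
case: f_and => excl ->; apply: eq_forallb => j; rewrite /arc /literal.
by move: (excl j i); case: (pos_arc f j i); case: (neg_arc f j i); case: (x j).
Qed.

(* The restrictions of [X] and [Y] to [I] are fixed points of the subnetwork of [f]
   on [I] induced by their common values outside [I]. *)
Definition twins I X Y :=
  [/\ {in ~: I, X =1 Y}, {in I, forall i, f X i = X i} & {in I, forall i, f Y i = Y i}].

Lemma subnet_fixed_points_twins I z y1 y2 :
  fixed_point (subnet f I z) y1 -> fixed_point (subnet f I z) y2 ->
  twins I (glue I z y1) (glue I z y2).
Proof.
have fixed y : fixed_point (subnet f I z) y -> {in I, forall i, f (glue I z y) i = glue I z y i}.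
  by move=> fix_y i iI; rewrite -[i]/(val (Sub i iI : {i | i \in I})) glue_val -{2}fix_y ffunE.
by move=> /fixed fix1 /fixed fix2; split => // v; rewrite inE => vI; rewrite !glue_out.
Qed.

Lemma twins_neq0 I X Y : twins I X Y -> X != Y -> I != set0.
Proof.
case=> off _ _; apply: contraNneq => I0; apply/eqP/ffunP => v.
by apply: off; rewrite I0 setC0 inE.
Qed.

Definition sole_parent I p u := [forall j in I, arc f j u ==> (j == p)].

Section MinimalTwins.
Variables (I : {set V}) (X Y : {ffun V -> bool}).
Hypotheses (XY_twins : twins I X Y) (X_neq_Y : X != Y).
Hypothesis I_minimal : forall T X' Y', T \proper I -> twins T X' Y' -> X' = Y'.

Lemma twins_opposite : {in I, forall i, Y i = ~~ X i}.
Proof.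
move=> i iI; have [XYi|] := eqVneq (X i) (Y i); last by case: (X i); case: (Y i).
case/negP: X_neq_Y; apply/eqP/(I_minimal (properD1 iI)).
case: XY_twins => off fixX fixY; split=> v; rewrite !inE.
- by rewrite negb_and negbK => /orP[/eqP->|vI] //; apply: off; rewrite inE.
- by case/andP=> _ /fixX.
- by case/andP=> _ /fixY.
Qed.

Lemma twins_sat i : i \in I -> f (if X i then X else Y) i.
Proof.
case: XY_twins => _ fixX fixY iI.
by case: ifP => Xi; rewrite ?fixX ?fixY ?twins_opposite ?Xi.
Qed.

Lemma literal_out k i : k \notin I -> i \in I -> arc f k i -> literal k i X.
Proof.
move=> kI iI arc_ki; have := twins_sat iI; rewrite and_netE => /forallP/(_ k).
rewrite arc_ki /literal; case: XY_twins => off _ _.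
by case: ifP; rewrite // -off // inE.
Qed.

Lemma literal_in b j i :
  j \in I -> i \in I -> arc f j i -> literal j i (if b then X else Y) = (X i == b).
Proof.
move=> jI iI arc_ji; have := twins_sat iI; rewrite and_netE => /forallP/(_ j).
rewrite arc_ji /literal; case: (X i); case: b => /=; rewrite ?(twins_opposite jI);
  by case: (X j); case: (neg_arc f j i).
Qed.

Lemma has_parent i : i \in I -> [exists j in I, arc f j i].
Proof.
move=> iI; apply: contraT; rewrite negb_exists_in => /forall_inP no_parent.
have : f X i = f Y i.
  rewrite !and_netE; apply: eq_forallb => j; case: (boolP (j \in I)) => jI.
    by rewrite (negbTE (no_parent j jI)).
  by case: XY_twins => off _ _; rewrite /literal off // inE.
case: XY_twins => _ -> // -> //; rewrite twins_opposite //; by case: (X i).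
Qed.

Lemma splice_fixed b T z :
  T \subset I -> {in T, forall u, [exists j in T, arc f j u]} -> {in ~: I, z =1 X} ->
  (forall k u, k \in I :\: T -> u \in T -> arc f k u -> literal k u z) ->
  {in T, forall u, f (splice T (if b then X else Y) z) u = splice T (if b then X else Y) z u}.
Proof.
move=> TI T_closed zX z_lit u uT; have uI := subsetP TI u uT.
have colour_u : (if b then X else Y) u = (X u == b).
  by case: b; rewrite ?twins_opposite //; case: (X u).
have lit_u j :
    arc f j u -> literal j u (splice T (if b then X else Y) z) = (j \notin T) || (X u == b).
  move=> arc_ju; rewrite /literal ffunE; case: ifP => jT /=.
    exact: literal_in (subsetP TI j jT) uI arc_ju.
  case: (boolP (j \in I)) => jI; first by apply: z_lit; rewrite ?inE ?jT.
  by rewrite zX ?inE //; apply: literal_out.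
have [j0 /andP[j0T arc_j0]] := existsP (T_closed u uT).
rewrite and_netE [in RHS]ffunE uT colour_u.
apply/forallP/idP => [/(_ j0)|Xub j]; first by rewrite arc_j0 lit_u // j0T.
by apply/implyP => /lit_u ->; rewrite Xub orbT.
Qed.

Lemma closed_subset_eq T z :
  T \subset I -> T != set0 -> {in T, forall u, [exists j in T, arc f j u]} ->
  {in ~: I, z =1 X} ->
  (forall k u, k \in I :\: T -> u \in T -> arc f k u -> literal k u z) -> T = I.
Proof.
move=> TI T0 T_closed zX z_lit; apply/eqP; apply: contraT => TnI.
have [t tT] := set0Pn _ T0.
suff /ffunP/(_ t) : splice T X z = splice T Y z.
  by rewrite !ffunE tT twins_opposite ?(subsetP TI) //; case: (X t).
apply: (@I_minimal T); first by rewrite properEneq TnI.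
split; first by move=> v; rewrite inE !ffunE => /negbTE ->.
- exact: (splice_fixed true).
- exact: (splice_fixed false).
Qed.

Lemma twins_agree_off b : {in ~: I, (if b then X else Y) =1 X}.
Proof. by case: b; case: XY_twins => // off _ _ v /off. Qed.

Lemma child_exists b v :
  v \in I -> [exists u in I, arc f v u && ((X u == b) || sole_parent I v u)].
Proof.
move=> vI; apply: contraT; rewrite negb_exists_in => /forall_inP no_child.
have other_parent u : u \in I -> exists2 j, j \in I :\ v & arc f j u.
  move=> uI; have /exists_inP[j jI arc_ju] := has_parent uI.
  have [jv|] := eqVneq j v; last by exists j; rewrite // !inE jI andbT.
  have /forall_inPn[k kI] : ~~ sole_parent I v u.
    by move: (no_child u uI); rewrite -jv arc_ju /= negb_or => /andP[].
  by rewrite negb_imply => /andP[arc_ku kv]; exists k; rewrite // !inE kI andbT.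
suff: I :\ v = I by move/setP/(_ v); rewrite !inE eqxx vI.
apply: (@closed_subset_eq _ (if ~~ b then X else Y)).
- exact: subsetDl.
- by have [j jIv _] := other_parent v vI; apply/set0Pn; exists j.
- move=> u; rewrite inE => /andP[_ uI].
  by have [j jIv arc_ju] := other_parent u uI; apply/exists_inP; exists j.
- exact: twins_agree_off.
- move=> k u; rewrite !inE => /andP[+ kI] /andP[_ uI]; rewrite kI andbT negbK => /eqP-> arc_vu.
  rewrite literal_in //; move: (no_child u uI); rewrite arc_vu negb_or => /andP[+ _].
  by clear; case: b; case: (X u).
Qed.

Lemma child_cover b u :
  u \in I -> exists2 v, v \in I & arc f v u && ((X u == b) || sole_parent I v u).
Proof.
move=> uI; pose P v w := arc f v w && ((X w == b) || sole_parent I v w).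
pose g v := odflt v [pick w in I | P v w].
have gP v : v \in I -> g v \in I /\ P v (g v).
  move=> vI; rewrite /g; case: pickP => [w /andP[]|none] //.
  by have /exists_inP[w wI Pvw] := child_exists b vI; move: (none w); rewrite wI /P Pvw.
have gI : {in I, forall v, g v \in I} by move=> v /gP[].
have RI := recurrent_in_sub g I.
have R_I : recurrent_in g I = I.
  apply: (@closed_subset_eq _ (if b then X else Y)).
  - exact: recurrent_in_sub.
  - by apply: recurrent_in_neq0 => //; apply/set0Pn; exists u.
  - move=> w /(recurrent_in_preimage gI)[v vR <-]; apply/exists_inP; exists v => //.
    by have [_ /andP[]] := gP v (subsetP RI v vR).
  - exact: twins_agree_off.
  - move=> k w; rewrite inE => /andP[kR kI] /[dup] wR.
    case/(recurrent_in_preimage gI)=> v vR gvw arc_kw.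
    rewrite literal_in ?(subsetP RI w wR) //.
    have [_ /andP[_]] := gP v (subsetP RI v vR); rewrite gvw => /orP[//|].
    by move/forall_inP/(_ k kI); rewrite arc_kw => /eqP kv; rewrite kv vR in kR.
move: uI; rewrite -{1}R_I => /(recurrent_in_preimage gI)[v vR <-].
by have vI := subsetP RI v vR; exists v => //; have [] := gP v vI.
Qed.

Lemma sole_parent_exists u : u \in I -> exists2 p, p \in I & sole_parent I p u.
Proof.
move=> uI; have [v vI /andP[_ v_par]] := child_cover true uI.
have [w wI /andP[_ w_par]] := child_cover false uI.
by case: (X u) v_par w_par => /= [_ ?|? _]; [exists w | exists v].
Qed.

Definition parent u := odflt u [pick p in I | sole_parent I p u].

Lemma parentP u : u \in I -> parent u \in I /\ sole_parent I (parent u) u.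
Proof.
move=> uI; rewrite /parent; case: pickP => [p /andP[]|none] //.
by have [p pI p_sole] := sole_parent_exists uI; move: (none p); rewrite pI p_sole.
Qed.

Lemma arc_parent j u : j \in I -> u \in I -> arc f j u = (j == parent u).
Proof.
move=> jI uI; have [pI /forall_inP p_sole] := parentP uI.
apply/idP/eqP => [arc_ju|->]; first exact/eqP/(implyP (p_sole j jI)).
have /exists_inP[k kI arc_ku] := has_parent uI.
by move: (p_sole k kI); rewrite arc_ku => /eqP <-.
Qed.

Lemma neg_arc_colour j i : j \in I -> i \in I -> arc f j i -> neg_arc f j i = (X j != X i).
Proof.
move=> jI iI arc_ji; have := literal_in true jI iI arc_ji; rewrite /literal eqb_id.
by case: (X i); case: (X j); case: (neg_arc f j i).
Qed.

Local Notation node := {i : V | i \in I}.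

Definition parent_node (i : node) : node := Sub (parent (val i)) (parentP (valP i)).1.

Definition child_node (i : node) : node := odflt i [pick j | arc f (val i) (val j)].

Lemma arc_child_node i : arc f (val i) (val (child_node i)).
Proof.
rewrite /child_node; case: pickP => // none.
have /exists_inP[u uI /andP[arc_iu _]] := child_exists true (valP i).
by move: (none (Sub u uI)); rewrite SubK arc_iu.
Qed.

Lemma child_nodeK : cancel child_node parent_node.
Proof.
move=> i; apply/val_inj/eqP.
by rewrite SubK eq_sym -(arc_parent (valP _) (valP _)) arc_child_node.
Qed.

Lemma parent_nodeK : cancel parent_node child_node.
Proof. exact: (bij_can_sym (injF_bij (can_inj child_nodeK)) _).2 child_nodeK. Qed.

Lemma subnet_value y i :
  subnet f I X y i = (y (parent_node i) != neg_arc f (parent (val i)) (val i)).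
Proof.
have [pI _] := parentP (valP i).
have lit_p : literal (parent (val i)) (val i) (glue I X y) =
             (y (parent_node i) != neg_arc f (parent (val i)) (val i)).
  by rewrite /literal -[parent _]/(val (parent_node i)) glue_val.
rewrite /subnet ffunE and_netE -lit_p; apply/forallP/idP => [/(_ (parent (val i)))|lit_pi j].
  by rewrite (arc_parent pI (valP i)) eqxx.
apply/implyP => arc_ji; case: (boolP (j \in I)) => jI.
  by move: arc_ji; rewrite (arc_parent jI (valP i)) => /eqP->.
by move: (literal_out jI (valP i) arc_ji); rewrite /literal glue_out.
Qed.

Lemma child_node_connected i j : fconnect child_node i j.
Proof.
have child_inj := can_inj child_nodeK.
have orbit_parent k : fconnect child_node i k -> fconnect child_node i (parent_node k).
  move/connect_trans; apply.
  by rewrite fconnect_sym // -[X in fconnect _ _ X](parent_nodeK k) fconnect1.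
pose C := [set val k | k in [set k | fconnect child_node i k]].
have C_I : C = I.
  apply: (@closed_subset_eq _ X).
  - by apply/subsetP => _ /imsetP[k _ ->]; exact: valP.
  - by apply/set0Pn; exists (val i); apply/imsetP; exists i; rewrite ?inE.
  - move=> _ /imsetP[k ik ->]; apply/exists_inP; exists (val (parent_node k)).
      by rewrite inE in ik; apply/imsetP; exists (parent_node k); rewrite // inE orbit_parent.
    by rewrite SubK (arc_parent (parentP (valP k)).1 (valP k)).
  - by move=> v.
  - move=> k w; rewrite inE => /andP[kC kI] /imsetP[u iu ->].
    rewrite (arc_parent kI (valP u)) => /eqP kp; case/negP: kC; rewrite kp.
    by rewrite inE in iu; apply/imsetP; exists (parent_node u); rewrite // inE orbit_parent.
have : val j \in C by rewrite C_I (valP j).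
by rewrite mem_imset ?inE //; exact: val_inj.
Qed.

Lemma minimal_twins_positive_circular : positive_circular (subnet f I X).
Proof.
have arcs j i := single_input_arcs (subnet_value ^~ i) j.
split=> [j i|]; first by have [-> ->] := arcs j i; rewrite andbACA andNb andbF.
exists child_node; split; [|split].
- move=> j i; have [pos neg] := arcs j i.
  by rewrite /arc pos neg -andb_orr orNb andbT eq_sym (can2_eq parent_nodeK child_nodeK).
- exact: child_node_connected.
- have -> : [set j | neg_arc (subnet f I X) j (child_node j)] =
            [set j | X (val j) != X (val (child_node j))].
    apply/setP => j; rewrite !inE; have [_ ->] := arcs j (child_node j).
    rewrite child_nodeK eqxx /= -[parent _]/(val (parent_node (child_node j))) child_nodeK.
    exact: neg_arc_colour (valP _) (valP _) (arc_child_node j).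
  exact: even_card_changes (can_inj child_nodeK).
Qed.

End MinimalTwins.

Lemma twins_eq I X Y :
  ~ (exists I z, I != set0 /\ positive_circular (subnet f I z)) -> twins I X Y -> X = Y.
Proof.
move=> no_pc; have [n] := ubnP #|I|.
elim: n I X Y => // n IHn I X Y /ltnSE leIn XY_twins.
apply/eqP; apply: contraT => X_neq_Y; case: no_pc; exists I, X.
split; first exact: twins_neq0 XY_twins X_neq_Y.
apply: minimal_twins_positive_circular XY_twins X_neq_Y _ => T X' Y' /proper_card ltTI.
by apply: IHn; exact: leq_trans ltTI leIn.
Qed.

End AndNet.

Theorem corollary10 (V : finType) (f : network V) :
  (0 < #|V|)%N ->
  and_net f ->
  ((forall (I : {set V}) (z : {ffun V -> bool}),
      I != set0 -> at_most_one_fixed_point (subnet f I z))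
   <->
   ~ (exists (I : {set V}) (z : {ffun V -> bool}),
        I != set0 /\ positive_circular (subnet f I z))).
Proof.
move=> _ f_and; split.
- move=> uniq [I [z [I_neq0 circ]]]; have [v vI] := set0Pn _ I_neq0.
  have [x [y [fix_x fix_y]]] := positive_circular_fixed_points (Sub v vI) circ.
  by apply; apply: uniq I_neq0 _ _ fix_x fix_y.
- move=> no_pc I z _ y1 y2 fix1 fix2; apply: (@glue_inj _ I z).
  exact: (twins_eq f_and no_pc (subnet_fixed_points_twins fix1 fix2)).
Qed.
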